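(* Let $E$ be an equational theory such that the variety $\mathsf{Alg}(E)$ of its models satisfies (IT) and is coherent. Then $\mathsf{Alg}^{op}_{fp}(E)$ is an $r$-regular category.
   Context: $\mathsf{Alg}^{op}_{fp}(E)$ is the opposite of the category of finitely presented $E$-algebras. A class of algebras satisfies (IT) (''injections are transferable'') if whenever $f:\mathcal A\to\mathcal B$ is a homomorphism and $g:\mathcal A\to\mathcal C$ is an injective homomorphism, there are a homomorphism $h:\mathcal C\to\mathcal E$ and an injective homomorphism $h':\mathcal B\to\mathcal E$ with $h'\circ f=h\circ g$. The variety is coherent if finitely generated subalgebras of finitely presented algebras are finitely presented. A category is $r$-regular if it has all finite limits, epimorphisms are stable under pullback, and every arrow factors as an epimorphism followed by a regular monomorphism. *)

From mathcomp Require Import all_boot.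
From Stdlib Require Import ProofIrrelevance.
From Stdlib Require List.

Set Implicit Arguments.
Unset Strict Implicit.
Unset Printing Implicit Defensive.

Record category := Category {
  Obj :> Type;
  Hom : Obj -> Obj -> Type;
  idm : forall A, Hom A A;
  comp : forall A B C, Hom B C -> Hom A B -> Hom A C;
  comp_id_l : forall A B (f : Hom A B), comp (idm B) f = f;
  comp_id_r : forall A B (f : Hom A B), comp f (idm A) = f;
  comp_assoc : forall A B C D (h : Hom C D) (g : Hom B C) (f : Hom A B),
      comp h (comp g f) = comp (comp h g) f
}.
Arguments Hom {c}.
Arguments idm {c}.
Arguments comp {c A B C}.

Definition op_category (C : category) : category.
Proof.
refine (@Category (Obj C) (fun A B => @Hom C B A) (fun A => idm A)
          (fun A B D g f => comp f g) _ _ _).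
- move=> A B f /=; exact: comp_id_r.
- move=> A B f /=; exact: comp_id_l.
- move=> A B D E h g f /=; by rewrite comp_assoc.
Defined.

Definition finite_type (T : Type) : Prop :=
  exists l : list T, forall x, List.In x l.

Definition finite_category (J : category) : Prop :=
  finite_type (Obj J) /\ forall a b : J, finite_type (Hom a b).

Record functor (J C : category) := Functor {
  Fobj :> J -> C;
  Fmap : forall a b : J, Hom a b -> Hom (Fobj a) (Fobj b);
  Fmap_id : forall a, Fmap (idm a) = idm (Fobj a);
  Fmap_comp : forall a b c (g : Hom b c) (f : Hom a b),
      Fmap (comp g f) = comp (Fmap g) (Fmap f)
}.
Arguments Fmap {J C} f0 {a b}.

Definition is_cone (J C : category) (D : functor J C) (X : C)
  (legs : forall j : J, Hom X (D j)) : Prop :=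
  forall (a b : J) (u : Hom a b), comp (Fmap D u) (legs a) = legs b.

Definition is_limit (J C : category) (D : functor J C) (L : C)
  (legs : forall j : J, Hom L (D j)) : Prop :=
  is_cone legs /\
  forall (X : C) (legs' : forall j : J, Hom X (D j)), is_cone legs' ->
    exists u : Hom X L,
      (forall j, comp (legs j) u = legs' j) /\
      (forall u' : Hom X L, (forall j, comp (legs j) u' = legs' j) -> u' = u).

Definition has_finite_limits (C : category) : Prop :=
  forall J : category, finite_category J ->
  forall D : functor J C, exists (L : C) (legs : forall j : J, Hom L (D j)),
    is_limit legs.

Definition epi (C : category) (A B : C) (f : Hom A B) : Prop :=
  forall (Z : C) (g h : Hom B Z), comp g f = comp h f -> g = h.

Definition is_equalizer (C : category) (A B Z : C) (g h : Hom B Z)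
  (m : Hom A B) : Prop :=
  comp g m = comp h m /\
  forall (X : C) (x : Hom X B), comp g x = comp h x ->
    exists u : Hom X A, comp m u = x /\
      (forall u' : Hom X A, comp m u' = x -> u' = u).

Definition regular_mono (C : category) (A B : C) (m : Hom A B) : Prop :=
  exists (Z : C) (g h : Hom B Z), is_equalizer g h m.

Definition is_pullback (C : category) (A B C1 P : C)
  (f : Hom A B) (g : Hom C1 B) (p1 : Hom P A) (p2 : Hom P C1) : Prop :=
  comp f p1 = comp g p2 /\
  forall (Q : C) (q1 : Hom Q A) (q2 : Hom Q C1), comp f q1 = comp g q2 ->
    exists u : Hom Q P, (comp p1 u = q1 /\ comp p2 u = q2) /\
      (forall u' : Hom Q P, comp p1 u' = q1 /\ comp p2 u' = q2 -> u' = u).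

Definition epis_pullback_stable (C : category) : Prop :=
  forall (A B C1 P : C) (f : Hom A B) (g : Hom C1 B) (p1 : Hom P A)
         (p2 : Hom P C1),
    epi f -> is_pullback f g p1 p2 -> epi p2.

Definition epi_regmono_factorization (C : category) : Prop :=
  forall (A B : C) (f : Hom A B), exists (I : C) (e : Hom A I) (m : Hom I B),
    epi e /\ regular_mono m /\ comp m e = f.

Definition r_regular (C : category) : Prop :=
  [/\ has_finite_limits C, epis_pullback_stable C &
      epi_regmono_factorization C].

Record signature := Signature { op_sym : Type; arity : op_sym -> nat }.

Inductive term (S : signature) (X : Type) : Type :=
| Var : X -> term S X
| App : forall o : op_sym S, ('I_(arity o) -> term S X) -> term S X.
Arguments Var {S X}.
Arguments App {S X}.

Record algebra (S : signature) := Algebra {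
  carrier :> Type;
  interp : forall o : op_sym S, ('I_(arity o) -> carrier) -> carrier
}.
Arguments interp {S} a o.

Fixpoint eval (S : signature) (A : algebra S) (X : Type) (v : X -> A)
  (t : term S X) : A :=
  match t with
  | Var x => v x
  | App o args => interp A o (fun i => eval v (args i))
  end.

Record eq_theory := EqTheory {
  th_sig : signature;
  th_axioms : term th_sig nat -> term th_sig nat -> Prop
}.

Definition satisfies (E : eq_theory) (A : algebra (th_sig E)) : Prop :=
  forall s t, th_axioms s t -> forall v : nat -> A, eval v s = eval v t.

Record model (E : eq_theory) := Model {
  model_alg :> algebra (th_sig E);
  model_sat : satisfies model_alg
}.

Definition is_hom (S : signature) (A B : algebra S) (f : A -> B) : Prop :=
  forall o (a : 'I_(arity o) -> A), f (interp A o a) = interp B o (fun i => f (a i)).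

Definition hom (S : signature) (A B : algebra S) := {f : A -> B | is_hom f}.

Definition hom_id (S : signature) (A : algebra S) : hom A A.
Proof. by exists (fun x => x). Defined.

Definition hom_comp (S : signature) (A B C : algebra S)
  (g : hom B C) (f : hom A B) : hom A C.
Proof.
exists (fun x => proj1_sig g (proj1_sig f x)).
move=> o a; rewrite (proj2_sig f) (proj2_sig g) //.
Defined.

(* A is finitely presented (relative to E): there are finitely many
   generators g and finitely many relations R such that A is the free
   E-algebra on the generators modulo R (universal property). *)
Definition fin_presented (E : eq_theory) (A : algebra (th_sig E)) : Prop :=
  exists (n : nat) (R : list (term (th_sig E) 'I_n * term (th_sig E) 'I_n))
         (g : 'I_n -> A),
    (forall p, List.In p R -> eval g p.1 = eval g p.2) /\
    forall (B : model E) (h : 'I_n -> B),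
      (forall p, List.In p R -> eval h p.1 = eval h p.2) ->
      exists f : hom A B,
        (forall i, proj1_sig f (g i) = h i) /\
        (forall f' : hom A B, (forall i, proj1_sig f' (g i) = h i) ->
           forall x, proj1_sig f' x = proj1_sig f x).

Definition op_closed (S : signature) (A : algebra S) (P : A -> Prop) : Prop :=
  forall o (a : 'I_(arity o) -> A), (forall i, P (a i)) -> P (interp A o a).

Definition subalgebra (S : signature) (A : algebra S) (P : A -> Prop)
  (HP : op_closed P) : algebra S :=
  @Algebra S {x : A | P x}
    (fun o a => exist P (interp A o (fun i => proj1_sig (a i)))
                  (HP o _ (fun i => proj2_sig (a i)))).

Definition fin_generated_pred (S : signature) (A : algebra S) (P : A -> Prop)
  : Prop :=
  exists (n : nat) (g : 'I_n -> A),
    forall x, P x <-> exists t : term S 'I_n, eval g t = x.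

Definition coherent (E : eq_theory) : Prop :=
  forall (A : model E), fin_presented A ->
  forall (P : A -> Prop) (HP : op_closed P),
    fin_generated_pred P -> fin_presented (subalgebra HP).

Definition IT (E : eq_theory) : Prop :=
  forall (A B C : model E) (f : hom A B) (g : hom A C),
    injective (proj1_sig g) ->
    exists (D : model E) (h : hom C D) (h' : hom B D),
      injective (proj1_sig h') /\
      forall x, proj1_sig h' (proj1_sig f x) = proj1_sig h (proj1_sig g x).

Definition fp_obj (E : eq_theory) := {A : model E | fin_presented A}.

Definition Alg_fp (E : eq_theory) : category.
Proof.
refine (@Category (fp_obj E)
          (fun A B => hom (proj1_sig A) (proj1_sig B))
          (fun A => hom_id _) (fun A B C g f => hom_comp g f) _ _ _).
- move=> A B [f hf]; rewrite /hom_comp /=; f_equal; exact: proof_irrelevance.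
- move=> A B [f hf]; rewrite /hom_comp /=; f_equal; exact: proof_irrelevance.
- move=> A B C D [h hh] [g hg] [f hf]; rewrite /hom_comp /=; f_equal;
    exact: proof_irrelevance.
Defined.

Definition Alg_fp_op (E : eq_theory) : category := op_category (Alg_fp E).

(* Finite limits in the opposite of Alg_fp(E) are finite colimits of finitely
   presented algebras, presented by the disjoint union of the generators and
   relations of the diagram plus finitely many relations making the legs
   compatible with each arrow.
   An epi there is an injective hom; its pushout along any hom stays injective
   because (IT) embeds the pushout square into a model in which the other side
   is injective, and the actual pushout maps into that model.  A hom f of
   f.p. algebras factors as a surjection onto its image followed by the
   inclusion: the image is f.p. by coherence, and a surjection between f.p.
   algebras is a coequalizer, its kernel being generated by finitely many
   pairs. *)

From mathcomp Require Import all_boot.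
From Stdlib Require Import FunctionalExtensionality PropExtensionality.
From Stdlib Require Import IndefiniteDescription ProofIrrelevance.
From Stdlib Require List.

Set Implicit Arguments.
Unset Strict Implicit.
Unset Printing Implicit Defensive.

Local Notation cid := (constructive_indefinite_description _).

Lemma In_mem (T : eqType) (x : T) (s : seq T) : x \in s -> List.In x s.
Proof.
elim: s => [|y s IH] //=; rewrite in_cons => /orP [/eqP ->|/IH]; by [left|right].
Qed.

Lemma In_ord_enum n (i : 'I_n) : List.In i (ord_enum n).
Proof. exact/In_mem/mem_ord_enum. Qed.

Definition lnth (T : Type) (l : list T) : 'I_(List.length l) -> T :=
  match l return 'I_(List.length l) -> T with
  | [::] => fun k =>
      False_rect T (Bool.diff_false_true (etrans (esym (ltn0 k)) (ltn_ord k)))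
  | x :: _ => fun k => List.nth k l x
  end.
Arguments lnth {T} l _.

Lemma In_lnth (T : Type) (l : list T) (x : T) :
  List.In x l -> exists k, lnth l k = x.
Proof.
case: l => [|y l] // x_in; have [n [/ltP lt_n <-]] := List.In_nth _ _ y x_in.
by exists (Ordinal lt_n).
Qed.

Lemma lnth_In (T : Type) (l : list T) k : List.In (lnth l k) l.
Proof. by case: l k => [|y l] [k lt_k] //; apply: List.nth_In; apply/ltP. Qed.

Section Terms.
Variable S : signature.

Fixpoint tsubst (X Y : Type) (s : X -> term S Y) (t : term S X) : term S Y :=
  match t with
  | Var x => s x
  | App o a => App o (fun i => tsubst s (a i))
  end.

Definition trename (X Y : Type) (f : X -> Y) : term S X -> term S Y :=
  tsubst (fun x => Var (f x)).

Lemma eval_subst (A : algebra S) X Y (v : Y -> A) (s : X -> term S Y) t :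
  eval v (tsubst s t) = eval (fun x => eval v (s x)) t.
Proof.
elim: t => [x|o a IH] //=.
by congr (interp A o); apply: functional_extensionality.
Qed.

Lemma eval_rename (A : algebra S) X Y (v : Y -> A) (f : X -> Y) t :
  eval v (trename f t) = eval (fun x => v (f x)) t.
Proof. exact: eval_subst. Qed.

Lemma hom_eval (A B : algebra S) (f : hom A B) X (v : X -> A) t :
  proj1_sig f (eval v t) = eval (fun x => proj1_sig f (v x)) t.
Proof.
elim: t => [x|o a IH] //=; rewrite (proj2_sig f).
by congr (interp B o); apply: functional_extensionality.
Qed.

Lemma hom_ext (A B : algebra S) (f g : hom A B) :
  (forall x, proj1_sig f x = proj1_sig g x) -> f = g.
Proof.
move=> /functional_extensionality fg.
exact: eq_sig_hprop (fun _ => proof_irrelevance _) _ _ fg.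
Qed.

Lemma val_eval (A : algebra S) (P : A -> Prop) (HP : op_closed P) X
  (v : X -> subalgebra HP) t :
  proj1_sig (eval v t) = eval (fun x => proj1_sig (v x)) t.
Proof.
elim: t => [x|o a IH] //=.
by congr (interp A o); apply: functional_extensionality.
Qed.

Lemma hom_congr (A B : algebra S) (f g : hom A B) (x : A) :
  f = g -> proj1_sig f x = proj1_sig g x.
Proof. by move->. Qed.

Lemma subalgebra_val_inj (A : algebra S) (P : A -> Prop) (HP : op_closed P)
  (x y : subalgebra HP) : proj1_sig x = proj1_sig y -> x = y.
Proof. by apply: eq_sig_hprop => z; apply: proof_irrelevance. Qed.

Lemma hom_comp_id (A B : algebra S) (f : hom A B) : hom_comp f (hom_id A) = f.
Proof. exact: hom_ext. Qed.

Definition subalgebra_incl (A : algebra S) (P : A -> Prop) (HP : op_closed P) :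
  hom (subalgebra HP) A :=
  exist (@is_hom S (subalgebra HP) A) (fun x : subalgebra HP => proj1_sig x)
    (fun o a => erefl).

End Terms.

Lemma subalgebra_satisfies (E : eq_theory) (A : model E) (P : A -> Prop)
  (HP : op_closed P) : satisfies (subalgebra HP).
Proof.
move=> s t st v; apply: subalgebra_val_inj.
by rewrite !val_eval; apply: model_sat.
Qed.

Definition submodel (E : eq_theory) (A : model E) (P : A -> Prop)
  (HP : op_closed P) : model E := Model (@subalgebra_satisfies E A P HP).

Section Presentations.
Variable E : eq_theory.
Local Notation S := (th_sig E).

Definition respects (A : algebra S) (X : Type) (v : X -> A)
  (R : list (term S X * term S X)) : Prop :=
  forall p, List.In p R -> eval v p.1 = eval v p.2.

(* Unfolds to the body of [fin_presented] for [X := 'I_n]. *)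
Definition presents (A : algebra S) (X : Type) (g : X -> A)
  (R : list (term S X * term S X)) : Prop :=
  respects g R /\
  forall (B : model E) (h : X -> B), respects h R ->
    exists f : hom A B,
      (forall x, proj1_sig f (g x) = h x) /\
      (forall f' : hom A B, (forall x, proj1_sig f' (g x) = h x) ->
         forall y, proj1_sig f' y = proj1_sig f y).

Lemma presents_hom_ext (A : algebra S) X (g : X -> A) R (B : model E)
  (f1 f2 : hom A B) :
  presents g R -> (forall x, proj1_sig f1 (g x) = proj1_sig f2 (g x)) -> f1 = f2.
Proof.
move=> [gR univ] f12; apply: hom_ext.
have f1R : respects (fun x => proj1_sig f1 (g x)) R.
  by move=> p /gR pR; rewrite -!hom_eval pR.
have [f [_ f_uniq]] := univ B _ f1R.
by move=> y; rewrite (f_uniq f1) // (f_uniq f2).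
Qed.

(* The values of terms in the generators form a subalgebra through which the
   identity factors. *)
Lemma presents_generated (A : model E) X (g : X -> A) R :
  presents g R -> forall x, exists t, eval g t = x.
Proof.
move=> gpres; pose P y := exists t, eval g t = y.
have HP : op_closed P.
  move=> o a aP; pose t i := proj1_sig (cid (aP i)).
  exists (App o t) => /=; congr (interp A o).
  by apply: functional_extensionality => i; rewrite /t; case: cid.
have [gR univ] := gpres.
pose gP x : submodel HP := exist P (g x) (ex_intro _ (Var x) erefl).
have gPR : respects gP R.
  by move=> p /gR pR; apply: subalgebra_val_inj; rewrite !val_eval.
have [f [fg _]] := univ _ gP gPR.
have incl_f : hom_comp (subalgebra_incl HP) f = hom_id A.
  by apply: (presents_hom_ext gpres) => x /=; rewrite fg.
move=> x; have /= <- := hom_congr x incl_f.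
exact: proj2_sig (proj1_sig f x).
Qed.

Lemma presents_fin_presented (A : algebra S) X (lx : list X) (g : X -> A)
  (R : list (term S X * term S X)) :
  (forall x, List.In x lx) -> presents g R -> fin_presented A.
Proof.
move=> lxP [gR univ].
pose phi := lnth lx.
have [psi phiK] : exists psi : X -> 'I_(List.length lx), forall x, phi (psi x) = x.
  by exists (fun x => proj1_sig (cid (In_lnth (lxP x)))) => x; case: cid.
pose rename_pair (p : term S X * term S X) := (trename psi p.1, trename psi p.2).
(* [lx] may have repetitions: identify the generators naming the same [x]. *)
pose R' := List.map rename_pair R ++
           List.map (fun i => (Var i, Var (psi (phi i)))) (ord_enum (List.length lx)).
have psiR (B : algebra S) (h : 'I_(List.length lx) -> B) :
    respects h R' -> respects (fun x => h (psi x)) R.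
  move=> hR' p pR; rewrite -!(eval_rename h psi).
  by apply: (hR' (rename_pair p)); apply/List.in_app_iff; left; apply: List.in_map.
have psi_phi (B : algebra S) (h : 'I_(List.length lx) -> B) i :
    respects h R' -> h (psi (phi i)) = h i.
  move=> hR'; symmetry; apply: (hR' (Var i, Var (psi (phi i)))).
  by apply/List.in_app_iff; right; apply: List.in_map; apply: In_ord_enum.
exists (List.length lx), R', (fun i => g (phi i)); split.
  have g_phi_psi : (fun x => g (phi (psi x))) = g.
    by apply: functional_extensionality => x; rewrite phiK.
  move=> p /List.in_app_iff [] /List.in_map_iff [q [<- q_in]] /=.
    by rewrite !eval_rename g_phi_psi; apply: gR.
  by rewrite phiK.
move=> B h hR'; have [f [fg f_uniq]] := univ B _ (psiR B h hR').
exists f; split => [i|f' f'g]; first by rewrite fg psi_phi.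
by apply: f_uniq => x; rewrite -{1}(phiK x) f'g.
Qed.

Section FreeModel.
Variables (X : Type) (R : list (term S X * term S X)).

Inductive tcong : term S X -> term S X -> Prop :=
| tcong_rel s t : List.In (s, t) R -> tcong s t
| tcong_axiom s t (sg : nat -> term S X) :
    th_axioms s t -> tcong (tsubst sg s) (tsubst sg t)
| tcong_refl t : tcong t t
| tcong_sym s t : tcong s t -> tcong t s
| tcong_trans s t u : tcong s t -> tcong t u -> tcong s u
| tcong_app o (a b : 'I_(arity o) -> term S X) :
    (forall i, tcong (a i) (b i)) -> tcong (App o a) (App o b).

(* Classes are represented by the predicates [tcong t], which makes the
   quotient a subtype of [term S X -> Prop]. *)
Definition tclass_type := {P : term S X -> Prop | exists t, P = tcong t}.

Definition tclass (t : term S X) : tclass_type :=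
  exist _ (tcong t) (ex_intro _ t erefl).

Definition trepr (q : tclass_type) : term S X := proj1_sig (cid (proj2_sig q)).

Lemma treprK q : tclass (trepr q) = q.
Proof.
rewrite /trepr; case: cid => t; case: q => P HP /= Pt; subst P.
by congr exist; apply: proof_irrelevance.
Qed.

Lemma tclass_eq s t : tcong s t -> tclass s = tclass t.
Proof.
move=> st; apply: eq_sig_hprop => [P|]; first exact: proof_irrelevance.
apply: functional_extensionality => u; apply: propositional_extensionality.
by split=> [|tu]; [apply: tcong_trans (tcong_sym st) | apply: tcong_trans st tu].
Qed.

Lemma tclass_tcong s t : tclass s = tclass t -> tcong s t.
Proof. by move/(congr1 (fun q => proj1_sig q t)) => /= ->; apply: tcong_refl. Qed.

Lemma trepr_tcong t : tcong (trepr (tclass t)) t.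
Proof. by apply: tclass_tcong; rewrite treprK. Qed.

Definition free_alg : algebra S :=
  @Algebra S tclass_type (fun o a => tclass (App o (fun i => trepr (a i)))).

Lemma interp_tclass o (a : 'I_(arity o) -> term S X) :
  interp free_alg o (fun i => tclass (a i)) = tclass (App o a).
Proof. by apply: tclass_eq; apply: tcong_app => i; apply: trepr_tcong. Qed.

Lemma eval_tclass Y (v : Y -> free_alg) t :
  eval v t = tclass (tsubst (fun y => trepr (v y)) t).
Proof.
elim: t => [y|o a IH] /=; first by rewrite treprK.
by apply: tclass_eq; apply: tcong_app => i; rewrite IH; apply: trepr_tcong.
Qed.

Lemma free_satisfies : satisfies free_alg.
Proof.
by move=> s t st v; rewrite !eval_tclass; apply: tclass_eq; apply: tcong_axiom.
Qed.

Definition free_model : model E := Model free_satisfies.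

Definition free_gen (x : X) : free_model := tclass (Var x).

Lemma eval_free_gen t : eval free_gen t = tclass t.
Proof.
rewrite eval_tclass; apply: tclass_eq; elim: t => [x|o a IH] /=.
  exact: trepr_tcong.
by apply: tcong_app.
Qed.

Lemma tcong_eval (B : model E) (h : X -> B) :
  respects h R -> forall s t, tcong s t -> eval h s = eval h t.
Proof.
move=> hR s t; elim=> {s t}.
- by move=> s t /hR.
- by move=> s t sg st; rewrite !eval_subst; apply: model_sat.
- by [].
- by move=> s t _ ->.
- by move=> s t u _ -> _ ->.
- move=> o a b _ IH /=; congr (interp B o).
  exact: functional_extensionality.
Qed.

Lemma free_presents : presents free_gen R.
Proof.
split=> [[s t] st|B h hR]; first by rewrite !eval_free_gen; apply/tclass_eq/tcong_rel.
have f_hom : is_hom (A := free_alg) (B := B) (fun q => eval h (trepr q)).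
  by move=> o a; rewrite (tcong_eval hR (trepr_tcong _)).
exists (exist _ _ f_hom) => /=; split=> [x|f' f'h q].
  exact: (tcong_eval hR (trepr_tcong (Var x))).
rewrite -{1}(treprK q); elim: (trepr q) => [x|o a IH] /=; first exact: f'h.
rewrite -interp_tclass (proj2_sig f').
by congr (interp B o); apply: functional_extensionality.
Qed.

Lemma free_fin_presented (lx : list X) :
  (forall x, List.In x lx) -> fin_presented free_model.
Proof. by move=> lxP; apply: presents_fin_presented lxP free_presents. Qed.

End FreeModel.

End Presentations.

Definition fp_model (E : eq_theory) (A : fp_obj E) : model E := proj1_sig A.
Coercion fp_model : fp_obj >-> model.

Record presentation (E : eq_theory) (A : algebra (th_sig E)) := Presentation {
  pres_size : nat;
  pres_rels : list (term (th_sig E) 'I_pres_size * term (th_sig E) 'I_pres_size);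
  pres_gen : 'I_pres_size -> A;
  pres_presents : presents pres_gen pres_rels
}.
Arguments pres_rels {E A} p.
Arguments pres_gen {E A} p _.
Arguments pres_presents {E A} p.

Section FinitelyPresented.
Variable E : eq_theory.
Local Notation S := (th_sig E).

Definition presentation_of (A : algebra S) (fpA : fin_presented A) :
  presentation A.
Proof. by case: (cid fpA) => n /cid [R /cid [g]]; apply: Presentation. Qed.

Definition pres_term (A : model E) (P : presentation A) (x : A) :
  term S 'I_(pres_size P) :=
  proj1_sig (cid (presents_generated (pres_presents P) x)).

Arguments pres_term {A} P x.

Lemma eval_pres_term (A : model E) (P : presentation A) x :
  eval (pres_gen P) (pres_term P x) = x.
Proof. by rewrite /pres_term; case: cid. Qed.

Definition free_fp (n : nat) : fp_obj E :=
  exist _ (free_model (X := 'I_n) [::]) (free_fin_presented [::] (@In_ord_enum n)).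

Lemma free_fp_lift n (A : model E) (a : 'I_n -> A) :
  exists f : hom (free_fp n) A, forall i, proj1_sig f (free_gen [::] i) = a i.
Proof.
have [_ univ] := @free_presents E ('I_n) [::].
by have [p []|f [fa _]] := univ A a; exists f.
Qed.

Lemma free_fp_hom_ext n (A : model E) (f1 f2 : hom (free_fp n) A) :
  (forall i, proj1_sig f1 (free_gen [::] i) = proj1_sig f2 (free_gen [::] i)) ->
  f1 = f2.
Proof. exact: presents_hom_ext (free_presents [::]). Qed.

Lemma fp_epiP (A B : fp_obj E) (f : hom B A) :
  @epi (Alg_fp_op E) A B f <-> injective (proj1_sig f).
Proof.
split=> [f_epi x y fxy | f_inj Z g h fg_fh].
  have [kx kxE] := free_fp_lift (fun _ : 'I_1 => x).
  have [ky kyE] := free_fp_lift (fun _ : 'I_1 => y).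
  have kxy : kx = ky.
    apply: (f_epi (free_fp 1)); apply: free_fp_hom_ext => i /=.
    by rewrite kxE kyE.
  by rewrite -(kxE ord0) -(kyE ord0) kxy.
apply: hom_ext => z; apply: f_inj.
exact: hom_congr fg_fh.
Qed.

Lemma pairs_coequalizer (B : model E) (ps : list (B * B)) :
  exists (Z : fp_obj E) (g h : hom Z B),
    forall (X : model E) (x : hom B X),
      hom_comp x g = hom_comp x h <->
      (forall p, List.In p ps -> proj1_sig x p.1 = proj1_sig x p.2).
Proof.
pose p_ := lnth ps.
have [g gE] := free_fp_lift (fun i => (p_ i).1).
have [h hE] := free_fp_lift (fun i => (p_ i).2).
exists (free_fp (List.length ps)), g, h => X x; split=> [xgh p pps | xps].
  have [i <-] := In_lnth pps.
  by have /= := hom_congr (free_gen [::] i) xgh; rewrite gE hE.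
apply: free_fp_hom_ext => i /=; rewrite gE hE; apply: xps.
exact: lnth_In.
Qed.

(* The kernel of [m] is generated by the lifts of the relations of [I] and by
   each generator of [B] paired with a lift of a term for its image. *)
Lemma surjective_regular_mono (I B : fp_obj E) (m : hom B I) :
  (forall y, exists x, proj1_sig m x = y) ->
  @regular_mono (Alg_fp_op E) I B m.
Proof.
move=> m_surj; pose PI := presentation_of (proj2_sig I).
pose PB := presentation_of (proj2_sig B).
have [lift liftK] : exists lift : 'I_(pres_size PI) -> B,
    forall i, proj1_sig m (lift i) = pres_gen PI i.
  by exists (fun i => proj1_sig (cid (m_surj (pres_gen PI i)))) => i; case: cid.
have m_lift : (fun i => proj1_sig m (lift i)) = pres_gen PI.
  exact: functional_extensionality.
have m_eval_lift t : proj1_sig m (eval lift t) = eval (pres_gen PI) t.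
  by rewrite hom_eval m_lift.
pose img_term j := pres_term PI (proj1_sig m (pres_gen PB j)).
pose ps := List.map (fun p => (eval lift p.1, eval lift p.2)) (pres_rels PI) ++
           List.map (fun j => (pres_gen PB j, eval lift (img_term j)))
             (ord_enum (pres_size PB)).
have psP (X : model E) (x : hom B X) :
    (forall p, List.In p ps -> proj1_sig x p.1 = proj1_sig x p.2) <->
    respects (fun i => proj1_sig x (lift i)) (pres_rels PI) /\
    forall j, proj1_sig x (pres_gen PB j) = proj1_sig x (eval lift (img_term j)).
  split=> [xps | [xrels ximg] p].
    split=> [p pR | j]; last by apply: (xps (_, _)); apply/List.in_app_iff;
      right; apply: List.in_map; apply: In_ord_enum.
    by rewrite -!hom_eval; apply: (xps (_, _)); apply/List.in_app_iff; left;
      apply: (List.in_map (fun p => (eval lift p.1, eval lift p.2))).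
  case/List.in_app_iff => /List.in_map_iff [q [<- qin]] /=; last exact: ximg.
  by rewrite !hom_eval; apply: xrels.
have [Z [g [h coeq]]] := pairs_coequalizer ps.
exists Z, g, h; split.
  apply/coeq/psP; rewrite m_lift; split=> [|j]; first exact: (pres_presents PI).1.
  by rewrite m_eval_lift eval_pres_term.
move=> X x /coeq/psP [xrels ximg].
have [_ univ] := pres_presents PI.
have [u [u_lift u_uniq]] := univ _ _ xrels.
exists u; split=> [|u' u'm].
  apply: (presents_hom_ext (pres_presents PB)) => j /=.
  rewrite ximg -[in LHS](eval_pres_term PI (proj1_sig m _)) !hom_eval.
  by congr eval; apply: functional_extensionality.
apply: hom_ext; apply: u_uniq => i.
by rewrite -liftK; apply: hom_congr u'm.
Qed.

Lemma image_op_closed (A B : algebra S) (f : hom A B) :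
  op_closed (fun b => exists a, proj1_sig f a = b).
Proof.
move=> o b bP; pose a i := proj1_sig (cid (bP i)).
exists (interp A o a); rewrite (proj2_sig f); congr (interp B o).
by apply: functional_extensionality => i; rewrite /a; case: cid.
Qed.

Lemma fp_op_epi_regmono_factorization :
  coherent E -> epi_regmono_factorization (Alg_fp_op E).
Proof.
move=> E_coh A B f; have img_closed := image_op_closed (f := f).
have img_fg : fin_generated_pred (fun a => exists b, proj1_sig f b = a).
  pose PB := presentation_of (proj2_sig B).
  exists (pres_size PB), (fun i => proj1_sig f (pres_gen PB i)) => a; split.
    case=> b <-; have [t <-] := presents_generated (pres_presents PB) b.
    by exists t; rewrite hom_eval.
  by case=> t <-; exists (eval (pres_gen PB) t); rewrite hom_eval.
pose I : fp_obj E :=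
  exist _ (submodel img_closed) (E_coh _ (proj2_sig A) _ img_closed img_fg).
have corestr_hom :
    is_hom (B := I) (fun b => exist _ (proj1_sig f b) (ex_intro _ b erefl)).
  by move=> o b; apply: subalgebra_val_inj; apply: (proj2_sig f).
exists I, (subalgebra_incl img_closed), (exist _ _ corestr_hom); split; [|split].
- by apply/fp_epiP => x y; apply: subalgebra_val_inj.
- apply: surjective_regular_mono => -[a [b fb]]; exists b.
  exact: subalgebra_val_inj.
- exact: hom_ext.
Qed.

End FinitelyPresented.
Arguments pres_term {E A} P x.

Section FiniteColimits.
Variables (E : eq_theory) (Idx : Type) (li : list Idx).
Hypothesis li_full : forall j, List.In j li.
Variable D : Idx -> fp_obj E.
Local Notation S := (th_sig E).

Record span := Span {
  span_apex : fp_obj E;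
  span_src : Idx;
  span_tgt : Idx;
  span_l : hom span_apex (D span_src);
  span_r : hom span_apex (D span_tgt)
}.

Variable spans : list span.

Definition cocone (Y : model E) (legs : forall j, hom (D j) Y) : Prop :=
  forall s, List.In s spans ->
    hom_comp (legs (span_src s)) (span_l s) = hom_comp (legs (span_tgt s)) (span_r s).

Definition is_colimit (L : fp_obj E) (legs : forall j, hom (D j) L) : Prop :=
  cocone legs /\
  forall (Y : model E) (legs' : forall j, hom (D j) Y), cocone legs' ->
    exists u : hom L Y, (forall j, hom_comp u (legs j) = legs' j) /\
      forall u' : hom L Y, (forall j, hom_comp u' (legs j) = legs' j) -> u' = u.

Let P j := presentation_of (proj2_sig (D j)).
Let PA s := presentation_of (proj2_sig (span_apex s)).
Local Notation li_ := (lnth li).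

(* The colimit is presented by the generators and relations of all the [D j],
   plus, for each span and each generator of its apex, the relation identifying
   its two images.  Generators are indexed by positions in [li] rather than by
   [Idx], which keeps their type small enough to carry an algebra; [gen] uses a
   chosen position for each [j], and the other positions are identified with it. *)
Let gens : Type := {k : 'I_(List.length li) & 'I_(pres_size (P (li_ k)))}.

Let pos j : {k | li_ k = j} := cid (In_lnth (li_full j)).

Let gen j (i : 'I_(pres_size (P j))) : gens :=
  let: exist k kj := pos j in
  existT _ k (eq_rect_r (fun j => 'I_(pres_size (P j))) i kj).

Lemma colim_gen_elim (Z : Type) (G : forall j, 'I_(pres_size (P j)) -> Z) j i :
  G (li_ (projT1 (@gen j i))) (projT2 (@gen j i)) = G j i.
Proof. by rewrite /gen; case: (pos j) => k kj; subst j. Qed.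

Let gens_list : list gens :=
  List.flat_map (fun k => List.map (existT _ k) (ord_enum _))
    (ord_enum (List.length li)).

Lemma In_colim_gens x : List.In x gens_list.
Proof.
case: x => k i; apply/List.in_flat_map; exists k; split; first exact: In_ord_enum.
by apply: List.in_map; apply: In_ord_enum.
Qed.

Let rename_rel j (p : term S 'I_(pres_size (P j)) * term S 'I_(pres_size (P j))) :=
  (trename (@gen j) p.1, trename (@gen j) p.2).

Let span_rel s (i : 'I_(pres_size (PA s))) :=
  (trename (@gen (span_src s))
     (pres_term (P (span_src s)) (proj1_sig (span_l s) (pres_gen (PA s) i))),
   trename (@gen (span_tgt s))
     (pres_term (P (span_tgt s)) (proj1_sig (span_r s) (pres_gen (PA s) i)))).

Let position_rel (x : gens) : term S gens * term S gens :=
  (Var x, Var (@gen (li_ (projT1 x)) (projT2 x))).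

Let rels :=
  List.flat_map (fun j => List.map (@rename_rel j) (pres_rels (P j))) li ++
  List.flat_map (fun s => List.map (@span_rel s) (ord_enum _)) spans ++
  List.map position_rel gens_list.

Let L : fp_obj E := exist _ (free_model rels) (free_fin_presented rels In_colim_gens).

Lemma In_colim_rels_rename j p :
  List.In p (pres_rels (P j)) -> List.In (rename_rel p) rels.
Proof.
move=> p_in; apply/List.in_app_iff; left; apply/List.in_flat_map.
by exists j; split; [exact: li_full | exact: List.in_map].
Qed.

Lemma In_colim_rels_span s i : List.In s spans -> List.In (@span_rel s i) rels.
Proof.
move=> s_in; apply/List.in_app_iff; right; apply/List.in_app_iff; left.
apply/List.in_flat_map; exists s; split => //.
by apply: List.in_map; apply: In_ord_enum.
Qed.

Lemma In_colim_rels_position x : List.In (position_rel x) rels.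
Proof.
do 2 (apply/List.in_app_iff; right).
by apply: List.in_map; apply: In_colim_gens.
Qed.

Lemma colim_free_gen_rename j t :
  eval (free_gen rels) (trename (@gen j) t) =
  eval (fun i => free_gen rels (@gen j i)) t.
Proof. exact: eval_rename. Qed.

Lemma colim_leg_exists j : exists f : hom (D j) L,
  forall i, proj1_sig f (pres_gen (P j) i) = free_gen rels (@gen j i).
Proof.
have [_ univ] := pres_presents (P j).
have gen_respects : respects (fun i => free_gen rels (@gen j i)) (pres_rels (P j)).
  move=> p p_in; rewrite -!colim_free_gen_rename.
  exact: (free_presents rels).1 (rename_rel p) (In_colim_rels_rename p_in).
by have [f [fgen _]] := univ L _ gen_respects; exists f.
Qed.

Let leg j := proj1_sig (cid (colim_leg_exists j)).

Lemma colim_leg_gen j i :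
  proj1_sig (leg j) (pres_gen (P j) i) = free_gen rels (@gen j i).
Proof. by rewrite /leg; case: cid. Qed.

Lemma colim_leg_eval j t :
  proj1_sig (leg j) (eval (pres_gen (P j)) t) =
  eval (free_gen rels) (trename (@gen j) t).
Proof.
rewrite hom_eval colim_free_gen_rename; congr eval.
by apply: functional_extensionality => i; rewrite colim_leg_gen.
Qed.

Lemma colim_cocone : cocone leg.
Proof.
move=> s s_in; apply: (presents_hom_ext (pres_presents (PA s))) => i /=.
rewrite -[proj1_sig (span_l s) _](eval_pres_term (P (span_src s))).
rewrite -[proj1_sig (span_r s) _](eval_pres_term (P (span_tgt s))) !colim_leg_eval.
exact: (free_presents rels).1 _ (In_colim_rels_span i s_in).
Qed.

Lemma colim_universal (Y : model E) (legs' : forall j, hom (D j) Y) :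
  cocone legs' ->
  exists u : hom L Y, (forall j, hom_comp u (leg j) = legs' j) /\
    forall u' : hom L Y, (forall j, hom_comp u' (leg j) = legs' j) -> u' = u.
Proof.
move=> legs'_cocone.
pose h (x : gens) := proj1_sig (legs' (li_ (projT1 x))) (pres_gen (P _) (projT2 x)).
have h_gen j i : h (@gen j i) = proj1_sig (legs' j) (pres_gen (P j) i).
  exact: (colim_gen_elim (fun j i => proj1_sig (legs' j) (pres_gen (P j) i))).
have h_rename j t :
    eval h (trename (@gen j) t) = proj1_sig (legs' j) (eval (pres_gen (P j)) t).
  by rewrite eval_rename hom_eval; congr eval; apply: functional_extensionality.
have hR : respects h rels.
  move=> p /List.in_app_iff [|/List.in_app_iff []].
  - case/List.in_flat_map => j [_ /List.in_map_iff [q [<- q_in]]].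
    by rewrite /= !h_rename (pres_presents (P j)).1.
  - case/List.in_flat_map => s [s_in /List.in_map_iff [i [<- _]]].
    rewrite /= !h_rename !eval_pres_term.
    exact: hom_congr (legs'_cocone s s_in).
  - by case/List.in_map_iff => x [<- _] /=; rewrite h_gen.
have [_ univ] := free_presents rels.
have [u [u_gen _]] := univ Y h hR.
exists u; split=> [j|u' u'_legs].
  apply: (presents_hom_ext (pres_presents (P j))) => i /=.
  by rewrite colim_leg_gen u_gen.
apply: (presents_hom_ext (free_presents rels)) => x.
have -> : free_gen rels x = free_gen rels (@gen (li_ (projT1 x)) (projT2 x)).
  exact: (free_presents rels).1 _ (In_colim_rels_position x).
rewrite u_gen h_gen -colim_leg_gen.
exact: hom_congr (u'_legs _).
Qed.

Lemma colimit_exists :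
  exists (L : fp_obj E) (legs : forall j, hom (D j) L), is_colimit legs.
Proof. by exists L, leg; split; [apply: colim_cocone | apply: colim_universal]. Qed.

End FiniteColimits.

Section RRegular.
Variable E : eq_theory.

(* A cone over [D] in the opposite category is a cocone under [D] coequalizing
   each [D u : D b -> D a] with the identity of [D b]. *)
Lemma fp_op_has_finite_limits : has_finite_limits (Alg_fp_op E).
Proof.
move=> J [[lo lo_full] hom_fin] D.
have [lh lh_full] : exists lh : forall a b : J, list (Hom a b),
    forall a b u, List.In u (lh a b).
  by exists (fun a b => proj1_sig (cid (hom_fin a b))) => a b u; case: cid.
pose Dobj (j : J) : fp_obj E := D j.
pose span_of a b (u : Hom a b) := @Span E _ Dobj (D b) a b (Fmap D u) (hom_id _).
pose spans := List.flat_map (fun a =>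
  List.flat_map (fun b => List.map (@span_of a b) (lh a b)) lo) lo.
have span_of_in a b u : List.In (span_of a b u) spans.
  apply/List.in_flat_map; exists a; split => //.
  by apply/List.in_flat_map; exists b; split => //; apply: List.in_map.
have cocone_cone (Y : fp_obj E) (legs : forall j : J, hom (Dobj j) Y) :
    cocone spans legs <-> is_cone (D := D) legs.
  split=> [legs_cocone a b u | legs_cone s].
    by rewrite /= (legs_cocone _ (span_of_in a b u)) hom_comp_id.
  case/List.in_flat_map => a [_ /List.in_flat_map [b [_ /List.in_map_iff [u [<- _]]]]].
  by rewrite /= hom_comp_id -(legs_cone a b u).
have [L [legs [/cocone_cone legs_cone univ]]] := colimit_exists lo_full spans.
exists L, legs; split=> // X legs' /cocone_cone /univ [u [u_legs u_uniq]].
by exists u.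
Qed.

Lemma fp_op_epis_pullback_stable : IT E -> epis_pullback_stable (Alg_fp_op E).
Proof.
move=> E_IT A B C P f g p1 p2 /fp_epiP f_inj [_ pb]; apply/fp_epiP.
have [M [h [h' [h'_inj hf_h'g]]]] := E_IT _ _ _ g f f_inj.
pose D (b : bool) : fp_obj E := if b then A else C.
have bool_full (b : bool) : List.In b [:: true; false] by case: b; [left | right; left].
have [L [legs [legs_cocone univ]]] :=
  colimit_exists bool_full [:: @Span E _ D B true false f g].
have [u [[_ u_p2] _]] :=
  pb L (legs true) (legs false) (legs_cocone _ (or_introl erefl)).
pose legs' b := if b as b return hom (D b) M then h else h'.
have [|k [k_legs _]] := univ M legs'.
  by move=> s [<-|[]]; apply: hom_ext => x /=; rewrite hf_h'g.
have h'_through_p2 : hom_comp k (hom_comp u p2) = h'.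
  by rewrite -[h']/(legs' false) -(k_legs false) -u_p2.
by move=> x y p2xy; apply: h'_inj; rewrite -h'_through_p2 /= p2xy.
Qed.

End RRegular.

Theorem mainTheorem5 (E : eq_theory) :
  IT E -> coherent E -> r_regular (Alg_fp_op E).
Proof.
move=> E_IT E_coh; split.
- exact: fp_op_has_finite_limits.
- exact: fp_op_epis_pullback_stable.
- exact: fp_op_epi_regmono_factorization.
Qed.
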